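(* Let $P(z) \in \mathbb{Z}[z]$ have degree at least $2$ with $P(0)=0$, and let $H(n,x,z) = \frac{P(z+nx) - P(z)}{x} \in \mathbb{Z}[n,x,z]$. For $n \in \mathbb{Z}_{\geq 0}$ define maps $\mathbb{Z}^3 \to \mathbb{Z}^3$ by $S_1(n)(x,y,z) = (x, y + H(n,x,z), z + nx)$ and $S_2(n)(x,y,z) = (x + H(n,y,z), y, z + ny)$, and let $\Gamma$ be the semigroup generated by $\{S_1(n), S_2(n) : n \geq 0\}$. Then each $S_i(n)$ preserves $F(x,y,z) = xy - P(z)$, and for every $v_0 = (x_0, y_0, z_0) \in \mathbb{Z}^3$ with $x_0 \neq 0$, the orbit $\Gamma v_0$ is hyperplane-fleeing.
   Context: A set $A \subset \mathbb{R}^d$ is hyperplane-fleeing if $A$ is not contained in any proper affine subspace (translate of a proper linear subspace) of $\mathbb{R}^d$. *)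

From HB Require Import structures.
From mathcomp Require Import all_boot all_order all_algebra.
Set Implicit Arguments. Unset Strict Implicit. Unset Printing Implicit Defensive.
Import Order.TTheory GRing.Theory Num.Theory.
Local Open Scope ring_scope.

Definition Z3 := (int * int * int)%type.

(* H(n,x,z) = (P(z+nx) - P(z))/x, written out as the polynomial in Z[n,x,z]
   obtained by expanding (z+nx)^i with the binomial theorem and dividing by x:
   sum_i p_i * sum_{k=1}^{i} C(i,k) z^(i-k) n^k x^(k-1). *)
Definition Hpol (P : {poly int}) (n x z : int) : int :=
  \sum_(i < size P) P`_i *
     \sum_(1 <= k < i.+1) ('C(i, k)%:R * z ^+ (i - k) * n ^+ k * x ^+ k.-1).

Definition S1 (P : {poly int}) (n : nat) (v : Z3) : Z3 :=
  let: (x, y, z) := v in (x, y + Hpol P n%:Z x z, z + n%:Z * x).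

Definition S2 (P : {poly int}) (n : nat) (v : Z3) : Z3 :=
  let: (x, y, z) := v in (x + Hpol P n%:Z y z, y, z + n%:Z * y).

Definition Fform (P : {poly int}) (v : Z3) : int :=
  let: (x, y, z) := v in x * y - P.[z].

Inductive inGamma (P : {poly int}) : (Z3 -> Z3) -> Prop :=
  | Gam_S1 n : inGamma P (S1 P n)
  | Gam_S2 n : inGamma P (S2 P n)
  | Gam_comp f g : inGamma P f -> inGamma P g -> inGamma P (f \o g).

Definition Gorbit (P : {poly int}) (v0 : Z3) (w : Z3) : Prop :=
  exists g, inGamma P g /\ w = g v0.

Definition embed (R : realFieldType) (v : Z3) : 'rV[R]_3 :=
  let: (x, y, z) := v in \row_(i < 3) (nth 0 [:: x; y; z] i)%:~R.

(* A subset A of R^d is hyperplane-fleeing if it is not contained in any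
   proper affine subspace v + U (U a linear subspace, the row space of a
   matrix of rank < d). *)
Definition hyperplane_fleeing (R : realFieldType) (d : nat)
    (A : 'rV[R]_d -> Prop) : Prop :=
  ~ exists (v : 'rV[R]_d) (U : 'M[R]_d),
      (\rank U < d)%N /\ forall a, A a -> (a - v <= U)%MS.

(** The maps S_i(n) preserve F because x * H(n,x,z) = P(z+nx) - P(z).  Suppose
    the orbit of v0 = (x0,y0,z0) lies in a plane c0 x + c1 y + c2 z = K.
    Comparing v0 with S_1(n) v0 gives c1 (P(z0+nx0) - P(z0)) + c2 n x0^2 = 0
    for all n, so the polynomial c1 P(t) + c2 x0 t - const vanishes on the
    infinite progression z0 + n x0 and is zero; as deg P >= 2 this forces
    c1 = 0 and then c2 = 0.  Hence c0 <> 0 and x is constant on the orbit.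
    But some orbit point (x0, y1, z1) has y1 <> 0, and P nonconstant gives
    an m with H(m,y1,z1) <> 0, so S_2(m) changes the first coordinate. *)

From HB Require Import structures.
From mathcomp Require Import all_boot all_order all_algebra.
From mathcomp Require Import ring.
Set Implicit Arguments.
Unset Strict Implicit.
Unset Printing Implicit Defensive.

Import Order.TTheory GRing.Theory Num.Theory.
Local Open Scope ring_scope.

Lemma exprD_difference_quotient (R : comNzRingType) (x n z : R) (i : nat) :
  x * \sum_(1 <= k < i.+1) ('C(i, k)%:R * z ^+ (i - k) * n ^+ k * x ^+ k.-1)
  = (z + n * x) ^+ i - z ^+ i.
Proof.
rewrite exprDn big_ord_recl /= subn0 bin0 expr0 mulr1 mulr1n addrAC subrr add0r.
rewrite big_add1 /= big_mkord mulr_sumr; apply: eq_bigr => k _.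
by rewrite /bump /= add1n exprMn !exprS -mulr_natl; ring.
Qed.

Lemma mulHpol (P : {poly int}) n x z : x * Hpol P n x z = P.[z + n * x] - P.[z].
Proof.
rewrite /Hpol !horner_coef -sumrB mulr_sumr; apply: eq_bigr => i _.
by rewrite mulrCA exprD_difference_quotient mulrBr.
Qed.

Lemma Hpol0 (P : {poly int}) x z : Hpol P 0 x z = 0.
Proof.
rewrite /Hpol big1 // => i _; rewrite big_add1 big1 ?mulr0 // => k _.
by rewrite expr0n /= mulr0 mul0r.
Qed.

Lemma Fform_S1 (P : {poly int}) n v : Fform P (S1 P n v) = Fform P v.
Proof. by case: v => [[x y] z] /=; rewrite mulrDr mulHpol; ring. Qed.

Lemma Fform_S2 (P : {poly int}) n v : Fform P (S2 P n v) = Fform P v.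
Proof.
by case: v => [[x y] z] /=; rewrite mulrDl (mulrC (Hpol _ _ _ _)) mulHpol; ring.
Qed.

Lemma poly_nonroot_progression (R : numDomainType) (Q : {poly R}) (z x : R) :
  x != 0 -> Q != 0 -> exists n : nat, Q.[z + n%:R * x] != 0.
Proof.
move=> x_neq0 Q_neq0; set rs := [seq z + i%:R * x | i <- iota 0 (size Q)].
have rs_uniq : uniq rs.
  rewrite map_inj_uniq ?iota_uniq // => i j /addrI /(mulIf x_neq0) /eqP.
  by rewrite eqr_nat => /eqP.
case: (boolP (all (root Q) rs)) => [rs_roots|/allPn [_ /mapP [i _ ->] Qi]].
  by have := max_poly_roots Q_neq0 rs_roots rs_uniq; rewrite size_map size_iota ltnn.
by exists i.
Qed.

Lemma exists_Hpol_neq0 (P : {poly int}) x z :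
  (1 < size P)%N -> x != 0 -> exists n : nat, Hpol P n x z != 0.
Proof.
move=> P_nonconst x_neq0.
have shift_neq0 : P - P.[z]%:P != 0.
  rewrite -size_poly_eq0 size_addl ?size_polyN; first by case: (size P) P_nonconst.
  exact: leq_ltn_trans (size_polyC_leq1 _) P_nonconst.
have [n] := poly_nonroot_progression z x_neq0 shift_neq0.
rewrite !hornerE natz subr_eq0 => Pn_neq; exists n.
by apply: contra Pn_neq => /eqP Hn; rewrite -subr_eq0 -mulHpol Hn mulr0.
Qed.

Lemma affine_subspace_sub_hyperplane (R : fieldType) (d : nat)
    (v : 'rV[R]_d) (U : 'M[R]_d) :
  (\rank U < d)%N ->
  exists2 k : 'rV[R]_d, k != 0 & forall a, (a - v <= U)%MS -> a *m k^T = v *m k^T.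
Proof.
move=> rkU; have : kermx U^T != 0.
  by rewrite -mxrank_eq0 mxrank_ker mxrank_tr subn_eq0 -ltnNge.
case/rowV0Pn=> k /sub_kermxP kU k_neq0; exists k => // a /submxP [D aDv].
apply/eqP; rewrite -subr_eq0 -mulmxBl aDv -mulmxA.
by rewrite -[U *m k^T]trmxK trmx_mul trmxK kU trmx0 mulmx0.
Qed.

Lemma embed_mulmx_tr (R : realFieldType) (k : 'rV[R]_3) x y z :
  (embed R (x, y, z) *m k^T) 0 0 = k 0 0 * x%:~R + k 0 1 * y%:~R + k 0 2 * z%:~R.
Proof.
rewrite mxE !big_ord_recl big_ord0 addr0 !mxE /= addrA.
rewrite (mulrC x%:~R) (mulrC y%:~R) (mulrC z%:~R).
by congr (_ * _ + _ * _ + _ * _); congr (k 0 _); apply: val_inj.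
Qed.

Lemma rV3_eq0 (R : fieldType) (k : 'rV[R]_3) :
  k 0 0 = 0 -> k 0 1 = 0 -> k 0 2 = 0 -> k = 0.
Proof.
move=> k0 k1 k2; apply/rowP => -[[|[|[|j]]] lt_j3] //; rewrite mxE.
- by rewrite -k0; congr (k 0 _); apply: val_inj.
- by rewrite -k1; congr (k 0 _); apply: val_inj.
- by rewrite -k2; congr (k 0 _); apply: val_inj.
Qed.

Lemma Hpol_affine_relation (R : numDomainType) (P : {poly int}) (x z : int)
    (c1 c2 : R) :
  (2 < size P)%N -> x != 0 ->
  (forall n : nat, c1 * (Hpol P n x z)%:~R + c2 * (n%:R * x%:~R) = 0) ->
  c1 = 0 /\ c2 = 0.
Proof.
move=> P_deg2 x_neq0 rel; have xR_neq0 : (x%:~R : R) != 0 by rewrite intr_eq0.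
set PR := map_poly (intr : int -> R) P.
set Q := c1 *: PR + (c2 * x%:~R) *: 'X - (c1 * PR.[z%:~R] + c2 * x%:~R * z%:~R)%:P.
have Q_progression (n : nat) : Q.[z%:~R + n%:R * x%:~R] = 0.
  have zn : (z%:~R + n%:R * x%:~R : R) = (z + n%:Z * x)%:~R by rewrite rmorphD rmorphM.
  have := congr1 (fun t => x%:~R * t) (rel n); rewrite mulr0 => <-.
  have := congr1 (intr : int -> R) (mulHpol P n x z).
  rewrite rmorphB rmorphM /= => /eqP; rewrite eq_sym subr_eq => /eqP Pzn.
  by rewrite /Q !hornerE zn !horner_map /= Pzn; ring.
have Q_eq0 : Q = 0.
  apply/eqP; apply: contraT => Q_neq0.
  have [n] := poly_nonroot_progression (z%:~R) xR_neq0 Q_neq0.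
  by rewrite Q_progression eqxx.
have c1_eq0 : c1 = 0.
  have : Q`_(size P).-1 = 0 by rewrite Q_eq0 coef0.
  have [deg_neq1 deg_neq0] : ((size P).-1 == 1%N) = false /\ ((size P).-1 == 0%N) = false.
    by case: (size P) P_deg2 => [|[|[|m]]].
  rewrite coefB coefD !coefZ coefX coefC coef_map /= deg_neq1 deg_neq0.
  rewrite mulr0 subr0 addr0 -lead_coefE.
  move/eqP; rewrite mulf_eq0 intr_eq0 lead_coef_eq0 => /orP [/eqP //|/eqP P0].
  by move: P_deg2; rewrite P0 size_poly0.
split=> //; have := rel 1%N; rewrite c1_eq0 mul0r add0r mul1r => /eqP.
by rewrite mulf_eq0 (negbTE xR_neq0) orbF => /eqP.
Qed.

Section Orbit.

Variables (P : {poly int}) (x0 y0 z0 : int).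
Hypotheses (P_deg2 : (2 < size P)%N) (x0_neq0 : x0 != 0).

Let v0 : Z3 := (x0, y0, z0).

Lemma Gorbit_apply g w : inGamma P g -> Gorbit P v0 w -> Gorbit P v0 (g w).
Proof. by move=> Gg [f [Gf ->]]; exists (g \o f); split=> //; apply: Gam_comp. Qed.

Lemma Gorbit_self : Gorbit P v0 v0.
Proof.
by exists (S1 P 0); split; [constructor | rewrite /= Hpol0 mul0r !addr0].
Qed.

Lemma Gorbit_S1_self n : Gorbit P v0 (S1 P n v0).
Proof. by apply: Gorbit_apply; [constructor | exact: Gorbit_self]. Qed.

Lemma Gorbit_second_neq0 : exists y1 z1, y1 != 0 /\ Gorbit P v0 (x0, y1, z1).
Proof.
have [y0_eq0|y0_neq0] := eqVneq y0 0; last first.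
  by exists y0, z0; split=> //; exact: Gorbit_self.
have [n Hn] := exists_Hpol_neq0 z0 (ltnW P_deg2) x0_neq0.
exists (Hpol P n x0 z0), (z0 + n%:Z * x0); split=> //.
by have := Gorbit_S1_self n; rewrite /= y0_eq0 add0r.
Qed.

Lemma Gorbit_first_moves : exists x y z, Gorbit P v0 (x, y, z) /\ x != x0.
Proof.
have [y1 [z1 [y1_neq0 orb1]]] := Gorbit_second_neq0.
have [m Hm] := exists_Hpol_neq0 z1 (ltnW P_deg2) y1_neq0.
have := Gorbit_apply (Gam_S2 P m) orb1; rewrite /S2 => orb2.
by do 3!eexists; split; first exact: orb2; rewrite -subr_eq0 addrAC subrr add0r.
Qed.

Lemma Gorbit_linear_relation_trivial (R : numDomainType) (c0 c1 c2 K : R) :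
  (forall x y z, Gorbit P v0 (x, y, z) ->
     c0 * x%:~R + c1 * y%:~R + c2 * z%:~R = K) ->
  [/\ c0 = 0, c1 = 0 & c2 = 0].
Proof.
move=> rel; have rel0 := rel _ _ _ Gorbit_self.
have [c1_eq0 c2_eq0] : c1 = 0 /\ c2 = 0.
  apply: (@Hpol_affine_relation _ P x0 z0) => // n.
  have := rel _ _ _ (Gorbit_S1_self n); rewrite -rel0 !rmorphD rmorphM /=.
  by move/eqP; rewrite -subr_eq0 => /eqP <-; rewrite pmulrn; ring.
split=> //; have [x [y [z [orb x_neq]]]] := Gorbit_first_moves.
move: (rel _ _ _ orb); rewrite -rel0 c1_eq0 c2_eq0 !mul0r !addr0 => /eqP.
rewrite -subr_eq0 -mulrBr mulf_eq0 -rmorphB intr_eq0 subr_eq0.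
by rewrite (negbTE x_neq) orbF => /eqP.
Qed.

End Orbit.

Theorem mainTheorem4 (P : {poly int}) (hdeg : (2 < size P)%N) (hP0 : P.[0] = 0) :
  (forall (n : nat) (v : Z3), Fform P (S1 P n v) = Fform P v) /\
  (forall (n : nat) (v : Z3), Fform P (S2 P n v) = Fform P v) /\
  (forall (v0 : Z3), v0.1.1 != 0 ->
     forall R : realFieldType,
       hyperplane_fleeing (fun a : 'rV[R]_3 => exists w, Gorbit P v0 w /\ a = embed R w)).
Proof.
split; first exact: Fform_S1.
split; first exact: Fform_S2.
move=> [[x0 y0] z0] /= x0_neq0 R [v [U [rkU orbit_in]]].
have [k k_neq0 k_const] := affine_subspace_sub_hyperplane v rkU.
have rel x y z : Gorbit P (x0, y0, z0) (x, y, z) ->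
    k 0 0 * x%:~R + k 0 1 * y%:~R + k 0 2 * z%:~R = (v *m k^T) 0 0.
  by move=> orb; rewrite -embed_mulmx_tr k_const //; apply: orbit_in; exists (x, y, z).
have [k0 k1 k2] := Gorbit_linear_relation_trivial hdeg x0_neq0 rel.
by move/eqP: k_neq0; apply; apply: rV3_eq0.
Qed.
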